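(* Let $\langle (x_n,y_n)\rangle_{n\in\mathbb{N}}$ be the solutions in $\mathbb{N}^2$ of $x^2-19\,y^2=1$, indexed so that $y_0<y_1<\cdots$. Suppose $n>0$ is not a power of $2$ and $y_n/39$ is representable. Then the equation \[ 19\cdot 3^2\cdot (r^2+r\,s+5\,s^2)^2 - 13^2\cdot (v^2+v\,u+5\,u^2)^2 = 2 \] has an integer solution $\bar r,\bar s,\bar v,\bar u$ with $\bar r\neq\pm1$ or $\bar s\neq 0$, such that $39\,(\bar r^2+\bar r\bar s+5\bar s^2)(\bar v^2+\bar v\bar u+5\bar u^2)\mid y_n$.
   Context: $(x_0,y_0)=(1,0)$, $(x_1,y_1)=(170,39)$, $x_n+y_n\sqrt{19}=(170+39\sqrt{19})^n$. A non-negative integer $N$ is called representable if $N=w^2+w\,t+5\,t^2$ for some $w,t\in\mathbb{Z}$. *)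

From Stdlib Require Import ZArith Arith Lia.
Open Scope Z_scope.

(* (x_n, y_n) with x_n + y_n sqrt 19 = (170 + 39 sqrt 19)^n,
   computed by the recursion
   x_{n+1} + y_{n+1} sqrt 19 = (x_n + y_n sqrt 19)(170 + 39 sqrt 19). *)
Fixpoint pell (n : nat) : Z * Z :=
  match n with
  | O => (1, 0)
  | S m => let (x, y) := pell m in (170 * x + 19 * 39 * y, 39 * x + 170 * y)
  end.

Definition xn (n : nat) : Z := fst (pell n).
Definition yn (n : nat) : Z := snd (pell n).

Definition Qf (w t : Z) : Z := w ^ 2 + w * t + 5 * t ^ 2.

Definition representable (N : Z) : Prop :=
  0 <= N /\ exists w t : Z, N = Qf w t.

Definition is_pow2 (n : nat) : Prop := exists k : nat, n = (2 ^ k)%nat.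

(* Let n = 2^k m with m odd.  Since n is not a power of 2, m = 2j+1 with
   j >= 1.  Since (13 + 3 sqrt 19)^2 = 2 (170 + 39 sqrt 19), there are
   integers a, b with (13 b + 3 a sqrt 19)^2 = 2 (x_m + y_m sqrt 19) (they
   satisfy a linear recursion, see [half]); hence y_m = 39 a b, where
   171 a^2 - 169 b^2 = 2, a > 1, and a, b are odd and coprime.  Doubling the
   index multiplies y by 2 x, and x_t, y_t are coprime, so y_n = y_m C with C
   coprime to a b.  Hence y_n / 39 = a b C, and a (resp. b) is a divisor of a
   represented number that is coprime to its cofactor.  Because the form
   w^2 + w t + 5 t^2 is the only reduced form of discriminant -19 (class
   number one), such divisors are themselves represented: a = Qf r s and
   b = Qf v u, which is the required solution. *)
From Stdlib Require Import ZArith Lia Znumtheory.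
Open Scope Z_scope.

Lemma Qf_eq w t : Qf w t = w * w + w * t + 5 * t * t.
Proof. unfold Qf; ring. Qed.

Lemma Qf_scale h w t : Qf (h * w) (h * t) = h * h * Qf w t.
Proof. rewrite !Qf_eq; ring. Qed.

(* The proof is
   Lagrange reduction: a unimodular change of variables makes |b| <= a,
   then either c < a (swap the roles of a and c, decreasing a) or the form
   is reduced, and the only reduced form of discriminant -19 is (1, +-1, 5). *)
Lemma disc19_values_of_Qf a : 0 < a -> forall b c x y,
  b * b - 4 * a * c = -19 -> exists w t, Qf w t = a * x * x + b * x * y + c * y * y.
Proof.
  intros Ha; generalize Ha; pattern a; apply Z_lt_induction; [clear a Ha | lia].
  intros a IH Ha b c x y Hd.
  set (k := (b + a) / (2 * a)).
  assert (Hk : 2 * a * k <= b + a < 2 * a * k + 2 * a).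
  { pose proof (Z.div_mod (b + a) (2 * a) ltac:(lia)).
    pose proof (Z.mod_pos_bound (b + a) (2 * a) ltac:(lia)). unfold k; lia. }
  set (b' := b - 2 * a * k). set (c' := a * k * k - b * k + c).
  assert (Hd' : b' * b' - 4 * a * c' = -19) by (unfold b', c'; rewrite <- Hd; ring).
  assert (Hval : a * x * x + b * x * y + c * y * y
                 = a * (x + k * y) * (x + k * y) + b' * (x + k * y) * y + c' * y * y)
    by (unfold b', c'; ring).
  assert (Hb' : - a <= b' < a) by (unfold b'; lia).
  rewrite Hval; clearbody b' c'; clear Hval Hd.
  assert (Hc' : 0 < c') by nia.
  destruct (Z_lt_le_dec c' a) as [Hlt | Hge].
  - destruct (IH c' ltac:(lia) Hc' (- b') a y (- (x + k * y)) ltac:(lia)) as [w [t Hw]].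
    exists w, t; rewrite Hw; ring.
  - (* reduced: |b'| <= a <= c' forces 3 a^2 <= 19 *)
    assert (a <= 2) by nia.
    assert (a = 1 \/ a = 2) as [-> | ->] by lia.
    + assert (b' = -1 \/ b' = 0) as [-> | ->] by lia; [|lia].
      assert (c' = 5) as -> by lia.
      exists (x + k * y), (- y); rewrite Qf_eq; ring.
    + exfalso; assert (b' = -2 \/ b' = -1 \/ b' = 0 \/ b' = 1)
        as [-> | [-> | [-> | ->]]] by lia; lia.
Qed.

(* A divisor A > 0 of a properly represented number is represented: writing
   u w + v t = 1, the form with first coefficient A built from (w, t, u, v)
   has discriminant -19. *)
Lemma proper_divisor_rep A B w t : 0 < A -> A * B = Qf w t -> Z.gcd w t = 1 ->
  exists r s, A = Qf r s.
Proof.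
  intros HA HN Hg.
  apply Zgcd_1_rel_prime, rel_prime_bezout in Hg; destruct Hg as [u v Huv].
  set (b := - 2 * w * v + w * u - v * t + 10 * t * u).
  set (c := Qf (- v) u).
  assert (Hdisc : b * b - 4 * Qf w t * c = -19 * (u * w + v * t) * (u * w + v * t))
    by (unfold b, c; rewrite !Qf_eq; ring).
  rewrite Huv, <- HN in Hdisc.
  destruct (disc19_values_of_Qf A HA b (B * c) 1 0 ltac:(lia)) as [r [s H]].
  exists r, s; rewrite H; ring.
Qed.

(* If the content g = gcd(w, t) is coprime to A, then g^2 divides the
   cofactor B and A divides the properly represented Qf (w/g) (t/g). *)
Lemma divisor_rep_coprime_content A B w t : 0 < A -> A * B = Qf w t ->
  Z.gcd w t <> 0 -> rel_prime (Z.gcd w t) A -> exists r s, A = Qf r s.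
Proof.
  intros HA HN Hg0 Hrel.
  set (g := Z.gcd w t) in *.
  destruct (Z.gcd_divide_l w t) as [w' Hw]; destruct (Z.gcd_divide_r w t) as [t' Ht].
  fold g in Hw, Ht.
  assert (HQ : Qf w t = g * g * Qf w' t')
    by (rewrite Hw, Ht, (Z.mul_comm w'), (Z.mul_comm t'); apply Qf_scale).
  assert (Hdiv : (g * g | A * B)) by (rewrite HN, HQ; exists (Qf w' t'); ring).
  destruct (Gauss _ _ _ Hdiv (rel_prime_sym _ _ (rel_prime_mult _ _ _
              (rel_prime_sym _ _ Hrel) (rel_prime_sym _ _ Hrel)))) as [B' HB'].
  apply (proper_divisor_rep A B' w' t' HA).
  - apply (Z.mul_reg_l _ _ (g * g)); [nia|].
    rewrite <- HQ, <- HN, HB'; ring.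
  - assert (w' = w / g) as -> by (rewrite Hw, Z.div_mul; auto).
    assert (t' = t / g) as -> by (rewrite Ht, Z.div_mul; auto).
    apply Z.gcd_div_gcd; auto.
Qed.

(* A common factor h > 1 of A and of
   the content of (w, t) has h^2 | A, and we descend to A / h^2. *)
Lemma coprime_divisor_rep A : 0 < A -> forall B w t, 0 < B ->
  rel_prime A B -> A * B = Qf w t -> exists r s, A = Qf r s.
Proof.
  intros HA; generalize HA; pattern A; apply Z_lt_induction; [clear A HA | lia].
  intros A IH HA B w t HB Hrp HN.
  set (g := Z.gcd w t).
  assert (Hg0 : g <> 0).
  { intro E; apply Z.gcd_eq_0 in E; destruct E as [-> ->]; rewrite Qf_eq in HN; nia. }
  set (h := Z.gcd g A).
  destruct (Z.eq_dec h 1) as [Hh1 | Hh1].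
  { apply (divisor_rep_coprime_content A B w t); auto. apply Zgcd_1_rel_prime; auto. }
  assert (Hh : 1 < h).
  { assert (0 <= h) by apply Z.gcd_nonneg.
    assert (h <> 0) by (intro E; apply Z.gcd_eq_0 in E; lia). lia. }
  destruct (Z.gcd_divide_l g A) as [g1 Hg1]; destruct (Z.gcd_divide_r g A) as [A1 HA1].
  destruct (Z.gcd_divide_l w t) as [w' Hw]; destruct (Z.gcd_divide_r w t) as [t' Ht].
  fold g h in Hg1, HA1, Hw, Ht.
  assert (HQ : Qf w t = h * h * Qf (g1 * w') (g1 * t')).
  { rewrite <- Qf_scale; f_equal; [rewrite Hw, Hg1 | rewrite Ht, Hg1]; ring. }
  assert (Hrel : rel_prime (h * h) B).
  { assert (rel_prime h B) by (apply (rel_prime_div A); auto; exists A1; auto).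
    apply rel_prime_sym, rel_prime_mult; apply rel_prime_sym; auto. }
  assert (Hdiv : (h * h | B * A)).
  { rewrite (Z.mul_comm B A), HN, HQ; exists (Qf (g1 * w') (g1 * t')); ring. }
  destruct (Gauss _ _ _ Hdiv Hrel) as [A' HA'].
  assert (HA'pos : 0 < A') by nia.
  assert (HA'lt : A' < A) by (assert (4 <= h * h) by nia; nia).
  destruct (IH A' ltac:(lia) HA'pos B (g1 * w') (g1 * t') HB) as [r [s Hrs]].
  - apply (rel_prime_div A); auto; exists (h * h); lia.
  - apply (Z.mul_reg_l _ _ (h * h)); [nia|]. rewrite <- HQ, <- HN, HA'; ring.
  - exists (h * r), (h * s); rewrite Qf_scale, <- Hrs, HA'; ring.
Qed.

Lemma xn_S m : xn (S m) = 170 * xn m + 741 * yn m.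
Proof. unfold xn, yn; simpl; destruct (pell m); simpl; ring. Qed.

Lemma yn_S m : yn (S m) = 39 * xn m + 170 * yn m.
Proof. unfold xn, yn; simpl; destruct (pell m); simpl; ring. Qed.

Lemma pell_add m k : xn (m + k) = xn m * xn k + 19 * yn m * yn k /\
                     yn (m + k) = xn m * yn k + yn m * xn k.
Proof.
  induction m as [|m [IHx IHy]]; simpl plus.
  - change (xn 0) with 1; change (yn 0) with 0; split; ring.
  - rewrite !xn_S, !yn_S, IHx, IHy; split; ring.
Qed.

Lemma yn_double t : yn (t + t) = 2 * xn t * yn t.
Proof. rewrite (proj2 (pell_add t t)); ring. Qed.

Lemma pell_eq m : xn m * xn m - 19 * yn m * yn m = 1.
Proof. induction m as [|m IH]; [reflexivity|]. rewrite xn_S, yn_S, <- IH; ring. Qed.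

Lemma xn_yn_coprime m : rel_prime (yn m) (xn m).
Proof. apply bezout_rel_prime; exists (-19 * yn m) (xn m); rewrite <- (pell_eq m); ring. Qed.

Lemma yn_pos m : (0 < m)%nat -> 0 < yn m.
Proof.
  assert (H : forall m, 1 <= xn m /\ 0 <= yn m /\ ((0 < m)%nat -> 0 < yn m)).
  { clear m; induction m as [|m IH]; [cbv; repeat split; try discriminate; lia|].
    rewrite xn_S, yn_S; lia. }
  apply H.
Qed.

(* The half-index sequence: 13 p_j + 3 q_j sqrt 19 = (13 + 3 sqrt 19)
   (170 + 39 sqrt 19)^j, whose square is 2 (x_{2j+1} + y_{2j+1} sqrt 19);
   [half j] is the pair (p_j, q_j). *)
Fixpoint half (j : nat) : Z * Z :=
  match j with
  | O => (1, 1)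
  | S i => let (a, b) := half i in (170 * a + 171 * b, 169 * a + 170 * b)
  end.

Definition hp (j : nat) : Z := fst (half j).
Definition hq (j : nat) : Z := snd (half j).

Lemma hp_S j : hp (S j) = 170 * hp j + 171 * hq j.
Proof. unfold hp, hq; simpl; destruct (half j); reflexivity. Qed.

Lemma hq_S j : hq (S j) = 169 * hp j + 170 * hq j.
Proof. unfold hp, hq; simpl; destruct (half j); reflexivity. Qed.

Lemma half_norm j : 171 * hq j * hq j - 169 * hp j * hp j = 2.
Proof. induction j as [|j IH]; [reflexivity|]. rewrite hp_S, hq_S, <- IH; ring. Qed.

Lemma half_square j : 2 * xn (2 * j + 1) = 169 * hp j * hp j + 171 * hq j * hq j /\
                      yn (2 * j + 1) = 39 * hp j * hq j.
Proof.
  induction j as [|j [IHx IHy]]; [split; reflexivity|].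
  replace (2 * S j + 1)%nat with (S (S (2 * j + 1))) by lia.
  rewrite hp_S, hq_S, !yn_S, !xn_S, yn_S; split.
  - transitivity (57799 * (2 * xn (2 * j + 1)) + 503880 * yn (2 * j + 1)); [ring|].
    rewrite IHx, IHy; ring.
  - transitivity (6630 * (2 * xn (2 * j + 1)) + 57799 * yn (2 * j + 1)); [ring|].
    rewrite IHx, IHy; ring.
Qed.

Lemma half_pos j : 1 <= hp j /\ 1 <= hq j /\ ((0 < j)%nat -> 1 < hq j).
Proof.
  induction j as [|j IH]; [cbv; repeat split; try discriminate; lia|].
  rewrite hp_S, hq_S; lia.
Qed.

Lemma norm_coprime a b : 171 * a * a - 169 * b * b = 2 ->
  rel_prime (a * b) 2 /\ rel_prime a b.
Proof.
  intros H.
  destruct (Z.Even_or_Odd a) as [[p ->] | [p ->]];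
    destruct (Z.Even_or_Odd b) as [[q ->] | [q ->]]; try (exfalso; nia).
  split; apply bezout_rel_prime.
  - exists 1 (- (2 * p * q + p + q)); ring.
  - (* 1 = a - 2 p = a - p (171 a^2 - 169 b^2) *)
    exists (1 - 171 * p * (2 * p + 1)) (169 * p * (2 * q + 1)).
    transitivity ((2 * p + 1) - p * (171 * (2 * p + 1) * (2 * p + 1)
                                     - 169 * (2 * q + 1) * (2 * q + 1))); [ring|].
    rewrite H; ring.
Qed.

(* Doubling the index k times multiplies y_m by a factor C coprime to every
   odd divisor d of y_m: each doubling multiplies by 2 x_t, and x_t is
   coprime to y_t, which d divides. *)
Lemma yn_doubling d m k : (d | yn m) -> rel_prime d 2 ->
  exists C, yn (2 ^ k * m) = yn m * C /\ rel_prime d C.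
Proof.
  intros Hd Hd2; induction k as [|k [C [HC HdC]]].
  - exists 1; split; [simpl; rewrite Nat.add_0_r; ring | apply rel_prime_sym, rel_prime_1].
  - set (t := (2 ^ k * m)%nat) in *.
    replace (2 ^ S k * m)%nat with (t + t)%nat by (unfold t; rewrite Nat.pow_succ_r'; lia).
    assert (Hdx : rel_prime d (xn t)).
    { apply (rel_prime_div (yn t)); [apply xn_yn_coprime |].
      rewrite HC; apply Z.divide_mul_l; exact Hd. }
    exists (2 * xn t * C); split; [rewrite yn_double, HC; ring |].
    apply rel_prime_mult; [apply rel_prime_mult |]; assumption.
Qed.

Lemma two_adic_split n : (0 < n)%nat -> exists k m, n = (2 ^ k * m)%nat /\ Nat.Odd m.
Proof.
  induction n as [n IH] using lt_wf_ind; intros Hn.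
  destruct (Nat.Even_or_Odd n) as [[h Hh] | Ho].
  - destruct (IH h ltac:(lia) ltac:(lia)) as [k [m [E Hm]]].
    exists (S k), m; split; [rewrite Nat.pow_succ_r'; lia | exact Hm].
  - exists 0%nat, n; split; [simpl; lia | exact Ho].
Qed.

Theorem corollary5 (n : nat) :
  (0 < n)%nat ->
  ~ is_pow2 n ->
  (39 | yn n) ->
  representable (yn n / 39) ->
  exists r s v u : Z,
    19 * 3 ^ 2 * (Qf r s) ^ 2 - 13 ^ 2 * (Qf v u) ^ 2 = 2 /\
    ~ ((r = 1 \/ r = -1) /\ s = 0) /\
    (39 * Qf r s * Qf v u | yn n).
Proof.
  intros Hn Hnot2 _ [_ [w [t Hwt]]].
  destruct (two_adic_split n Hn) as [k [m [En [j Hm]]]]; subst m.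
  destruct j as [|j]; [exfalso; apply Hnot2; exists k; lia|].
  set (a := hq (S j)); set (b := hp (S j)).
  destruct (half_square (S j)) as [_ Hym]; fold a b in Hym.
  destruct (half_pos (S j)) as [Hb [Ha Ha1]]; fold a b in Hb, Ha, Ha1.
  specialize (Ha1 ltac:(lia)).
  pose proof (half_norm (S j)) as Hnorm; fold a b in Hnorm.
  destruct (norm_coprime a b Hnorm) as [Hab2 Hab].
  destruct (yn_doubling (a * b) (2 * S j + 1) k) as [C [HC HabC]];
    [rewrite Hym; exists 39; ring | exact Hab2 |].
  rewrite <- En in HC.
  assert (HCpos : 0 < C) by (pose proof (yn_pos n Hn); nia).
  assert (Hq : yn n / 39 = a * b * C).
  { rewrite HC, Hym; replace (39 * b * a * C) with (a * b * C * 39) by ring.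
    apply Z.div_mul; lia. }
  assert (HaC : rel_prime a C)
    by (apply (rel_prime_div (a * b)); [exact HabC | exists b; ring]).
  assert (HbC : rel_prime b C)
    by (apply (rel_prime_div (a * b)); [exact HabC | exists a; ring]).
  destruct (coprime_divisor_rep a ltac:(lia) (b * C) w t ltac:(nia)
              (rel_prime_mult _ _ _ Hab HaC) ltac:(rewrite <- Hwt, Hq; ring)) as [r [s Hrs]].
  destruct (coprime_divisor_rep b ltac:(lia) (a * C) w t ltac:(nia)
              (rel_prime_mult _ _ _ (rel_prime_sym _ _ Hab) HbC) ltac:(rewrite <- Hwt, Hq; ring))
    as [v [u Hvu]].
  exists r, s, v, u; rewrite <- Hrs, <- Hvu; split; [|split].
  - lia.
  - intros [[-> | ->] ->]; rewrite Qf_eq in Hrs; lia.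
  - exists C; rewrite HC, Hym; ring.
Qed.
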